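(* For every integer $n\ge 1$, \[ \sum_{k=1}^{n}(-1)^{k-1}\genfrac{\{}{\}}{0pt}{}{n}{k}(k-1)!\,H_{k}=B_{n-1}. \] For integers $n>1$, $m\ge 1$ with $n+m$ odd (and $n+m\ge 3$), \[ (-1)^{n-1}\frac{n-1}{2}B_{n+m-1}=\sum_{j=1}^{n}\sum_{k=1}^{m}(-1)^{k+j}\genfrac{\{}{\}}{0pt}{}{n}{j}\genfrac{\{}{\}}{0pt}{}{m}{k}\frac{j!\,k!\,H_{j}}{(k+j)(k+j+1)}. \]
   Context: $\genfrac{\{}{\}}{0pt}{}{n}{k}$ denotes the Stirling numbers of the second kind, $H_k=\sum_{i=1}^k 1/i$ the harmonic numbers, and $B_n$ the Bernoulli numbers, $\sum_{n\ge0}B_n t^n/n!=t/(e^t-1)$ (so $B_1=-1/2$). *)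

From mathcomp Require Import all_boot all_order all_algebra.
Set Implicit Arguments. Unset Strict Implicit. Unset Printing Implicit Defensive.
Import Order.TTheory GRing.Theory Num.Theory.
Local Open Scope ring_scope.

Fixpoint stirling2 (n k : nat) : nat :=
  match n, k with
  | 0, 0 => 1
  | 0, _.+1 => 0
  | _.+1, 0 => 0
  | n'.+1, k'.+1 => (k'.+1 * stirling2 n' k'.+1 + stirling2 n' k')%N
  end.

Definition harmonic (k : nat) : rat := \sum_(1 <= i < k.+1) (i%:R)^-1.

(* Bernoulli numbers with t/(e^t-1) = sum B_n t^n/n! (so B_1 = -1/2).
   Comparing coefficients of t^{n+1} in (e^t - 1) * sum B_k t^k/k! = t gives
   B_0 = 1 and sum_{k<=n} C(n+1,k) B_k = 0 for n >= 1, i.e.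
   B_n = -(1/(n+1)) sum_{k<n} C(n+1,k) B_k.  bern_seq n = [B_0; ...; B_n]. *)
Fixpoint bern_seq (n : nat) : seq rat :=
  match n with
  | 0 => [:: 1]
  | n'.+1 =>
      let s := bern_seq n' in
      rcons s (- (\sum_(k < n'.+1) ('C(n'.+2, k))%:R * s`_k) / (n'.+2)%:R)
  end.

Definition bernoulli (n : nat) : rat := (bern_seq n)`_n.

From HB Require Import structures.
From mathcomp Require Import all_boot all_order all_algebra.
From mathcomp Require Import ring.
Set Implicit Arguments. Unset Strict Implicit. Unset Printing Implicit Defensive.
Import Order.TTheory GRing.Theory Num.Theory.
Local Open Scope ring_scope.

(* Let q_n = -(D x(1-x))^n 1 with D = d/dx ([stirling_poly]); its coefficients are
   (-1)^(i+1) (i+1)! S(n+1,i+1). Its companion u_n ([harmonic_poly]) has the same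
   coefficients times H_(i+1). Integrating over [0,1], the polynomials x q_(n-1)
   have integral B_n: their binomial sums satisfy the recursion defining B_n. The
   integral of u_n is then -B_n, which is the first identity read coefficientwise.
   The double sum is the integral of x(1-x) u_a q_b. By parts, p |-> (x(1-x) p)' is
   antisymmetric for the pairing (p, q) |-> int x(1-x) p q, which gives a recursion
   in a. It reduces everything to int x(1-x) q_a q_b, equal to (-1)^a B_(a+b+2) or,
   for a+b odd, to 0 by the symmetry x |-> 1-x; the same symmetry shows that
   int x^2(1-x) q_a q_b is half of it. *)

Section Integral01.

Variable R : numFieldType.
Implicit Types (p q f g : {poly R}) (a : R).

Definition antideriv p : {poly R} :=
  \poly_(i < (size p).+1) (if i is j.+1 then p`_j / j.+1%:R else 0).

Lemma coef_antideriv p i :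
  (antideriv p)`_i = if i is j.+1 then p`_j / j.+1%:R else 0.
Proof.
rewrite coef_poly; case: i => // j; rewrite ltnS.
by case: ltnP => // le_p_j; rewrite nth_default ?mul0r.
Qed.

Fact antideriv_is_semilinear : semilinear antideriv.
Proof.
split=> [a p | p q]; apply/polyP => -[|i];
  by rewrite !(coefZ, coefD, coef_antideriv) ?(mulr0, addr0, mulrA, mulrDl).
Qed.
HB.instance Definition _ :=
  GRing.isSemilinear.Build R {poly R} {poly R} _ antideriv antideriv_is_semilinear.

Lemma deriv_antideriv p : (antideriv p)^`() = p.
Proof.
apply/polyP => i; rewrite coef_deriv coef_antideriv -(mulr_natr (_ / _)).
by rewrite mulfVK ?pnatr_eq0.
Qed.

Lemma antideriv_deriv p : antideriv p^`() = p - (p`_0)%:P.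
Proof.
apply/polyP => -[|i]; rewrite coef_antideriv coefB coefC ?subrr //=.
by rewrite coef_deriv subr0 -(mulr_natr p`_i.+1) mulfK ?pnatr_eq0.
Qed.

Definition integral01 p : R := (antideriv p).[1].

Fact integral01_is_semilinear : semilinear_for *%R integral01.
Proof. by split=> [a p | p q]; rewrite /integral01 (linearZ, linearD) hornerE. Qed.
HB.instance Definition _ :=
  GRing.isSemilinear.Build R {poly R} R *%R integral01 integral01_is_semilinear.

Lemma integral01Z a p : integral01 (a *: p) = a * integral01 p.
Proof. by rewrite /integral01 linearZ hornerZ. Qed.

Lemma integral01_deriv p : integral01 p^`() = p.[1] - p.[0].
Proof. by rewrite /integral01 antideriv_deriv hornerD hornerN hornerC horner_coef0. Qed.

Lemma integral01_Xn k : integral01 ('X^k) = k.+1%:R^-1.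
Proof.
have -> : 'X^k = k.+1%:R^-1 *: ('X^(k.+1))^`() :> {poly R}.
  by rewrite derivXn -scaler_nat scalerA mulVf ?pnatr_eq0 ?scale1r.
by rewrite integral01Z integral01_deriv !hornerXn expr1n expr0n subr0 mulr1.
Qed.

Lemma integral01_coef p d :
  (size p <= d)%N -> integral01 p = \sum_(i < d) p`_i / i.+1%:R.
Proof.
move=> le_p_d; rewrite -{1}(take_poly_id le_p_d) /take_poly poly_def raddf_sum /=.
by apply: eq_bigr => i _; rewrite integral01Z integral01_Xn.
Qed.

Lemma integral01_by_parts f g :
  integral01 (f^`() * g) = (f * g).[1] - (f * g).[0] - integral01 (f * g^`()).
Proof. by rewrite -integral01_deriv derivM raddfD addrK. Qed.

Lemma deriv_comp_1subX p : p^`() \Po (1 - 'X) = - (p \Po (1 - 'X))^`().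
Proof. by rewrite deriv_comp derivB derivX derivC sub0r mulrN1 opprK. Qed.

Lemma integral01_comp_1subX p : integral01 (p \Po (1 - 'X)) = integral01 p.
Proof.
rewrite -{1}(deriv_antideriv p) deriv_comp_1subX.
rewrite raddfN /= -{2}(deriv_antideriv p) !integral01_deriv !horner_comp !hornerE.
by rewrite subr0 subrr opprB.
Qed.

Lemma integral01_eq0_comp_1subX p : p \Po (1 - 'X) = - p -> integral01 p = 0.
Proof.
move=> p_odd; have : integral01 p *+ 2 = 0.
  by rewrite mulr2n -{1}integral01_comp_1subX p_odd raddfN /= addNr.
by move/eqP; rewrite mulrn_eq0 => /eqP.
Qed.

Definition x1x : {poly R} := 'X * (1 - 'X).

Lemma x1x_comp_1subX : x1x \Po (1 - 'X) = x1x.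
Proof.
by rewrite /x1x comp_polyM comp_polyB !comp_polyX comp_polyC polyC1 subKr mulrC.
Qed.

Lemma coef_x1xM p i : (x1x * p)`_i.+1 = p`_i - ('X * p)`_i.
Proof.
have -> : x1x * p = 'X * (p - 'X * p) by rewrite /x1x; ring.
by rewrite coefXM coefB.
Qed.

Lemma horner_x1xM p : (x1x * p).[0] = 0 /\ (x1x * p).[1] = 0.
Proof. by rewrite /x1x !hornerE subrr mul0r. Qed.

Lemma integral01_deriv_x1xM p : integral01 (x1x * p)^`() = 0.
Proof. by case: (horner_x1xM p) => h0 h1; rewrite integral01_deriv h0 h1 subrr. Qed.

Lemma integral01_x1x_by_parts f g :
  integral01 (x1x * (x1x * f)^`() * g) = - integral01 (x1x * f * (x1x * g)^`()).
Proof.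
have [h0 h1] := horner_x1xM (f * (x1x * g)).
by rewrite mulrAC mulrC integral01_by_parts -mulrA h0 h1 subrr sub0r.
Qed.

Lemma integral01_x1xXn s : integral01 (x1x * 'X^s) = ((s.+2 * s.+3)%N%:R)^-1.
Proof.
have -> : x1x * 'X^s = 'X^(s.+1) - 'X^(s.+2) by rewrite /x1x !exprS; ring.
rewrite raddfB /= !integral01_Xn natrM.
by field; rewrite -!natrD !pnatr_eq0.
Qed.

Lemma integral01_x1xM_coef p q m n :
  (size p <= m)%N -> (size q <= n)%N ->
  integral01 (x1x * p * q)
  = \sum_(i < m) \sum_(l < n) p`_i * q`_l * ((i + l).+2 * (i + l).+3)%:R^-1.
Proof.
move=> le_p_m le_q_n.
rewrite -{1}(take_poly_id le_p_m) -{1}(take_poly_id le_q_n) /take_poly !poly_def.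
rewrite -mulrA mulr_suml mulr_sumr raddf_sum; apply: eq_bigr => i _ /=.
rewrite !mulr_sumr raddf_sum; apply: eq_bigr => l _ /=.
by rewrite -scalerAl -!scalerAr scalerA integral01Z -exprD integral01_x1xXn.
Qed.

End Integral01.

Arguments x1x {R}.
Arguments integral01 {R}.

Lemma stirling2_eq0 n k : (n < k)%N -> stirling2 n k = 0%N.
Proof. by elim: n k => [|n IHn] [|k] //= lt_n_k; rewrite !IHn ?muln0 // ltnW. Qed.

Lemma stirling2SS n k :
  stirling2 n.+1 k.+1 = (k.+1 * stirling2 n k.+1 + stirling2 n k)%N.
Proof. by []. Qed.

Lemma harmonicS k : harmonic k.+1 = harmonic k + k.+1%:R^-1.
Proof. by rewrite /harmonic big_nat_recr. Qed.

Lemma harmonic1 : harmonic 1 = 1.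
Proof. by rewrite /harmonic big_nat1 invr1. Qed.

Lemma size_bern_seq n : size (bern_seq n) = n.+1.
Proof. by elim: n => //= n IHn; rewrite size_rcons IHn. Qed.

Lemma nth_bern_seq n k : (k <= n)%N -> (bern_seq n)`_k = bernoulli k.
Proof.
elim: n => [|n IHn]; first by rewrite leqn0 => /eqP ->.
rewrite leq_eqVlt => /orP[/eqP -> // | lt_k_n].
by rewrite /= nth_rcons size_bern_seq lt_k_n IHn.
Qed.

Lemma bernoulliS n :
  bernoulli n.+1 = - (\sum_(k < n.+1) 'C(n.+2, k)%:R * bernoulli k) / n.+2%:R.
Proof.
rewrite /bernoulli /= nth_rcons size_bern_seq ltnn eqxx.
by congr (- _ / _); apply: eq_bigr => k _; rewrite nth_bern_seq // -ltnS.
Qed.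

Fixpoint stirling_poly n : {poly rat} :=
  if n is n'.+1 then (x1x * stirling_poly n')^`() else -1.

Fixpoint harmonic_poly n : {poly rat} :=
  if n is n'.+1 then (x1x * harmonic_poly n')^`() - 'X * stirling_poly n' else -1.

Lemma coef_stirling_poly n i :
  (stirling_poly n)`_i = (-1) ^+ i.+1 * (i.+1)`!%:R * (stirling2 n.+1 i.+1)%:R.
Proof.
elim: n i => [|n IHn] i.
  by rewrite /= coefN coef1; case: i => [|i]; rewrite /= ?muln0 ?mulr0 ?oppr0.
rewrite /= coef_deriv coef_x1xM coefXM; case: i => [|i]; rewrite !IHn /=; first by ring.
by rewrite (factS i.+1) !exprS; ring.
Qed.

Lemma coef_harmonic_poly n i :
  (harmonic_poly n)`_i
  = (-1) ^+ i.+1 * (i.+1)`!%:R * harmonic i.+1 * (stirling2 n.+1 i.+1)%:R.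
Proof.
elim: n i => [|n IHn] i.
  rewrite /= coefN coef1; case: i => [|i] /=; first by rewrite harmonic1 !mulr1.
  by rewrite muln0 mulr0 oppr0.
rewrite /= coefB coef_deriv coef_x1xM !coefXM.
case: i => [|i]; rewrite !IHn ?coef_stirling_poly /=; first by rewrite harmonic1; ring.
rewrite (harmonicS i.+1) (factS i.+1) !exprS.
by field; rewrite -natrD pnatr_eq0.
Qed.

Lemma size_stirling_poly n : (size (stirling_poly n) <= n.+1)%N.
Proof.
by apply/leq_sizeP => i le_n_i; rewrite coef_stirling_poly stirling2_eq0 ?mulr0.
Qed.

Lemma size_harmonic_poly n : (size (harmonic_poly n) <= n.+1)%N.
Proof.
by apply/leq_sizeP => i le_n_i; rewrite coef_harmonic_poly stirling2_eq0 ?mulr0.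
Qed.

(* The coefficients are (-1)^k k! S(n,k): this is the Fubini polynomial at -x. *)
Definition fubini_poly n : {poly rat} :=
  if n is n'.+1 then 'X * stirling_poly n' else 1.
Arguments fubini_poly : simpl never.

Lemma fubini_polyS n : fubini_poly n.+1 = 'X * ((1 - 'X) * fubini_poly n)^`().
Proof.
case: n => [|n]; rewrite /fubini_poly.
  by rewrite mulr1 derivB derivX derivC sub0r.
by rewrite mulrA [(1 - 'X) * 'X]mulrC.
Qed.

Definition binomial_fubini_poly M : {poly rat} :=
  \sum_(k < M.+1) 'C(M, k)%:R *: fubini_poly k.

Lemma binomial_fubini_polyS M :
  binomial_fubini_poly M.+1
  = binomial_fubini_poly M + 'X * ((1 - 'X) * binomial_fubini_poly M)^`().
Proof.
have -> : 'X * ((1 - 'X) * binomial_fubini_poly M)^`()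
          = \sum_(k < M.+1) 'C(M, k)%:R *: fubini_poly k.+1.
  rewrite mulr_sumr raddf_sum mulr_sumr; apply: eq_bigr => k _ /=.
  by rewrite -scalerAr derivZ -scalerAr -fubini_polyS.
rewrite /binomial_fubini_poly big_ord_recl.
under eq_bigr => k _ do rewrite lift0 binS natrD scalerDl.
rewrite big_split addrA; congr (_ + _).
rewrite [RHS]big_ord_recl [in LHS]big_ord_recr /=.
by rewrite (@bin_small M M.+1) // scale0r addr0 !bin0.
Qed.

Lemma binomial_fubini_poly_stirling c :
  binomial_fubini_poly c.+1 = - ((1 - 'X) * stirling_poly c).
Proof.
elim: c => [|c IHc].
  rewrite binomial_fubini_polyS /binomial_fubini_poly big_ord1 /= scale1r mulr1.
  by rewrite derivB derivX derivC; ring.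
rewrite binomial_fubini_polyS IHc /= /x1x.
rewrite !(derivM, derivN, derivB, derivX, derivC); ring.
Qed.

Lemma sum_binomial_integral01_fubini_poly c :
  \sum_(k < c.+2) 'C(c.+2, k)%:R * integral01 (fubini_poly k) = 0.
Proof.
have := congr1 integral01 (binomial_fubini_poly_stirling c.+1).
rewrite /binomial_fubini_poly raddf_sum big_ord_recr /= binn scale1r.
under eq_bigr => k _ do rewrite integral01Z.
have -> : - ((1 - 'X) * stirling_poly c.+1)
          = fubini_poly c.+2 - (x1x * stirling_poly c)^`().
  by rewrite /fubini_poly /=; ring.
by rewrite raddfB /= integral01_deriv_x1xM subr0 => /(canRL (addrK _)); rewrite subrr.
Qed.

Lemma integral01_fubini_poly n : integral01 (fubini_poly n) = bernoulli n.
Proof.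
elim/ltn_ind: n => -[|n] IHn.
  by rewrite (_ : fubini_poly 0 = 'X^0) // integral01_Xn invr1.
have := sum_binomial_integral01_fubini_poly n.
rewrite big_ord_recr /= binSn => /eqP; rewrite addr_eq0 => /eqP sum_eq.
rewrite bernoulliS; under eq_bigr => k _ do rewrite -(IHn k (ltn_ord k)).
by rewrite sum_eq opprK mulrAC mulfV ?pnatr_eq0 // mul1r.
Qed.

Lemma integral01_harmonic_poly n : integral01 (harmonic_poly n) = - bernoulli n.
Proof.
case: n => [|n] /=.
  by rewrite raddfN /= (_ : 1 = 'X^0) // integral01_Xn invr1.
rewrite raddfB /= integral01_deriv_x1xM sub0r.
by rewrite (_ : 'X * stirling_poly n = fubini_poly n.+1) // integral01_fubini_poly.
Qed.

Lemma sum_stirling2_fact_harmonic n :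
  \sum_(1 <= k < n.+2)
     (-1) ^+ (k - 1) * (stirling2 n.+1 k)%:R * ((k - 1)`!)%:R * harmonic k
  = - integral01 (harmonic_poly n).
Proof.
rewrite big_add1 /= big_mkord (integral01_coef (size_harmonic_poly n)) -sumrN.
apply: eq_bigr => i _; rewrite coef_harmonic_poly subn1 /= factS natrM exprS.
by field; rewrite addrC natr1 pnatr_eq0.
Qed.

Lemma stirling_poly_comp_1subX n :
  stirling_poly n \Po (1 - 'X) = (-1) ^+ n *: stirling_poly n.
Proof.
elim: n => [|n IHn] /=; first by rewrite raddfN /= -polyC1 comp_polyC scale1r.
rewrite deriv_comp_1subX comp_polyM x1x_comp_1subX IHn -scalerAr derivZ.
by rewrite exprS mulN1r scaleNr.
Qed.

Definition int_ss a b := integral01 (x1x * stirling_poly a * stirling_poly b).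
Definition int_Xss a b := integral01 ('X * (x1x * stirling_poly a * stirling_poly b)).
Definition int_hs a b := integral01 (x1x * harmonic_poly a * stirling_poly b).

Lemma x1x_stirling_polyM_comp_1subX a b :
  (x1x * stirling_poly a * stirling_poly b) \Po (1 - 'X)
  = (-1) ^+ (a + b) *: (x1x * stirling_poly a * stirling_poly b).
Proof.
rewrite 2!comp_polyM x1x_comp_1subX !stirling_poly_comp_1subX exprD.
by rewrite -!scalerAr -scalerAl !scalerA [(-1) ^+ b * _]mulrC.
Qed.

Lemma int_ss_skew a b : int_ss a b.+1 = - int_ss a.+1 b.
Proof. by rewrite /int_ss /= integral01_x1x_by_parts opprK. Qed.

Lemma int_ss_shift a b : int_ss a b = (-1) ^+ b * int_ss (a + b) 0.
Proof.
elim: b a => [|b IHb] a; first by rewrite mul1r addn0.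
by rewrite int_ss_skew IHb addSnnS exprS mulN1r mulNr.
Qed.

Lemma int_ss0 c : int_ss c 0 = bernoulli c.+2.
Proof.
rewrite -integral01_fubini_poly /int_ss /fubini_poly /= mulrN1 raddfN /= [in RHS]mulrC.
by rewrite integral01_by_parts derivX mulr1 /x1x !hornerE.
Qed.

Lemma int_ss_odd a b : odd (a + b) -> int_ss a b = 0.
Proof.
move=> odd_ab; apply: integral01_eq0_comp_1subX.
by rewrite x1x_stirling_polyM_comp_1subX -signr_odd odd_ab scaleN1r.
Qed.

Lemma int_ss_even a b : ~~ odd (a + b) -> int_ss a b = (-1) ^+ a * bernoulli (a + b).+2.
Proof.
move=> even_ab; rewrite int_ss_shift int_ss0; congr (_ * _).
rewrite -signr_odd -[in RHS]signr_odd.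
by move: even_ab; rewrite oddD; case: (odd a) (odd b) => -[].
Qed.

Lemma int_ss_double a b : ~~ odd (a + b) -> int_ss a b = int_Xss a b *+ 2.
Proof.
move=> even_ab; rewrite /int_ss /int_Xss.
set g := x1x * stirling_poly a * stirling_poly b.
have g_even : g \Po (1 - 'X) = g.
  by rewrite x1x_stirling_polyM_comp_1subX -signr_odd (negbTE even_ab) scale1r.
rewrite {1}(_ : g = 'X * g + (('X * g) \Po (1 - 'X))); last first.
  by rewrite comp_polyM comp_polyX g_even; ring.
by rewrite raddfD /= integral01_comp_1subX mulr2n.
Qed.

Lemma int_hsS a b : int_hs a.+1 b = - int_hs a b.+1 - int_Xss a b.
Proof.
rewrite /int_hs /int_Xss /= mulrBr mulrBl raddfB /= integral01_x1x_by_parts.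
by congr (- _ - integral01 _); ring.
Qed.

Lemma int_hs_odd a b :
  odd (a + b) -> int_hs a b = (-1) ^+ a * (a%:R / 2) * bernoulli (a + b).+1.
Proof.
elim: a b => [|a IHa] b odd_ab.
  by rewrite !(mul0r, mulr0); exact: (int_ss_odd odd_ab).
have even_ab : ~~ odd (a + b) by move: odd_ab; rewrite addSn.
have Xss_half : int_Xss a b = (-1) ^+ a * bernoulli (a + b).+2 / 2.
  rewrite -int_ss_even // int_ss_double //.
  by rewrite -(mulr_natr (int_Xss a b)) mulfK ?pnatr_eq0.
by rewrite int_hsS IHa ?addnS // Xss_half addSn -natr1 exprS; field.
Qed.

Lemma int_hs_sum a b :
  int_hs a b
  = \sum_(1 <= j < a.+2) \sum_(1 <= k < b.+2)
      (-1) ^+ (k + j) * (stirling2 a.+1 j)%:R * (stirling2 b.+1 k)%:R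
      * ((j`! * k`!)%:R * harmonic j) / (((k + j) * (k + j + 1))%N)%:R.
Proof.
rewrite /int_hs (integral01_x1xM_coef (size_harmonic_poly a) (size_stirling_poly b)).
rewrite big_add1 /= big_mkord; apply: eq_bigr => j _.
rewrite big_add1 /= big_mkord; apply: eq_bigr => k _.
rewrite coef_harmonic_poly coef_stirling_poly !stirling2SS exprD.
rewrite (_ : ((k.+1 + j.+1) * (k.+1 + j.+1 + 1))%N = ((j + k).+2 * (j + k).+3)%N).
  by ring.
by rewrite addn1 addSn addnS addnC.
Qed.

Theorem corollary1 :
  (forall n : nat, (1 <= n)%N ->
     \sum_(1 <= k < n.+1)
        (-1) ^+ (k - 1) * (stirling2 n k)%:R * ((k - 1)`!)%:R * harmonic k
     = bernoulli (n - 1))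
  /\
  (forall n m : nat, (1 < n)%N -> (1 <= m)%N -> odd (n + m) ->
     (-1) ^+ (n - 1) * ((n - 1)%:R / 2) * bernoulli (n + m - 1)
     = \sum_(1 <= j < n.+1) \sum_(1 <= k < m.+1)
          (-1) ^+ (k + j) * (stirling2 n j)%:R * (stirling2 m k)%:R
          * ((j`! * k`!)%:R * harmonic j) / (((k + j) * (k + j + 1))%N)%:R).
Proof.
split=> [[|n] // _ | [|a] // [|b] // _ _ odd_nm].
  by rewrite sum_stirling2_fact_harmonic integral01_harmonic_poly opprK subn1.
have odd_ab : odd (a + b) by move: odd_nm; rewrite addSn addnS /= negbK.
by rewrite -int_hs_sum int_hs_odd // !subn1 addSn addnS.
Qed.
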